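(* Let $m>n\ge1$ be coprime integers. Define $$\mathcal{A}_{\frac{m}{n}}(q)=q\,\mathcal{N}_{\frac{m}{n}}(q)\mathcal{N}_{\frac{n}{m}}(q)+\mathcal{D}_{\frac{m}{n}}(q)\mathcal{D}_{\frac{n}{m}}(q),$$ $$\mathcal{B}_{\frac{m}{n}}(q)=\mathcal{N}_{\frac{m}{n}}(q)\mathcal{D}_{\frac{n}{m}}(q)-\mathcal{D}_{\frac{m}{n}}(q)\mathcal{N}_{\frac{n}{m}}(q),$$ $$\mathcal{C}_{\frac{m}{n}}(q)=q\,\mathcal{N}_{\frac{m}{n}}(q)^2+\mathcal{D}_{\frac{m}{n}}(q)^2.$$ Then $$\mathcal{A}_{\frac{m}{n}}(q)^2+q\,\mathcal{B}_{\frac{m}{n}}(q)^2=\mathcal{C}_{\frac{m}{n}}(q)\,\mathcal{C}^*_{\frac{m}{n}}(q),$$ where $\mathcal{C}^*_{\frac{m}{n}}(q):=q^{\deg(\mathcal{C}_{\frac{m}{n}})}\,\mathcal{C}_{\frac{m}{n}}(q^{-1})$.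
   Context: The $q$-deformed rationals: $x\mapsto[x]_q$ is the unique map from $\mathbb{Q}\cup\{\infty\}$ to $\mathbb{Q}(q)\cup\{\infty\}$ satisfying $[0]_q=0$, $[x+1]_q=q[x]_q+1$ and $[-1/x]_q=-1/(q[x]_q)$. For positive rational $x$, $\mathcal{N}_x,\mathcal{D}_x\in\mathbb{Z}[q]$ are the numerator and denominator of $[x]_q$: the polynomials with no common divisor in $\mathbb{Z}[q]$ other than $\pm1$ and with positive leading coefficients such that $[x]_q=\mathcal{N}_x/\mathcal{D}_x$. *)

From HB Require Import structures.
From mathcomp Require Import all_boot all_order all_algebra fraction.
Set Implicit Arguments. Unset Strict Implicit. Unset Printing Implicit Defensive.
Import Order.TTheory GRing.Theory Num.Theory.
Local Open Scope ring_scope.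

Notation Qq := {fraction {poly int}}.
Notation tofracZq := (@FracField.tofrac {poly int}).
Notation "x %:F" := (tofracZq x) : ring_scope.
Definition qq : Qq := ('X : {poly int})%:F.

(* Q u {oo} and Q(q) u {oo} are modelled by option types, None = oo. *)

Definition shiftQ (x : option rat) : option rat :=
  if x is Some r then Some (r + 1) else None.
Definition negrecQ (x : option rat) : option rat :=
  match x with
  | Some r => if r == 0 then None else Some (- r^-1)
  | None => Some 0
  end.
Definition shiftK (y : option Qq) : option Qq :=
  if y is Some r then Some (qq * r + 1) else None.
Definition negrecK (y : option Qq) : option Qq :=
  match y with
  | Some r => if r == 0 then None else Some (- (qq * r)^-1)
  | None => Some 0
  end.

(* f is the q-deformation map x |-> [x]_q *)
Definition is_qdeformation (f : option rat -> option Qq) : Prop :=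
  [/\ f (Some 0) = Some 0,
      forall x, f (shiftQ x) = shiftK (f x)
    & forall x, f (negrecQ x) = negrecK (f x)].

Definition pdvd (d p : {poly int}) : Prop := exists r : {poly int}, p = r * d.
Definition coprime_Zq (p1 p2 : {poly int}) : Prop :=
  forall d, pdvd d p1 -> pdvd d p2 -> d = 1 \/ d = -1.

Definition is_numden (f : option rat -> option Qq) (x : rat) (N D : {poly int}) : Prop :=
  [/\ coprime_Zq N D, 0 < lead_coef N, 0 < lead_coef D,
      D != 0 & f (Some x) = Some (N%:F / D%:F)].

From HB Require Import structures.
From mathcomp Require Import all_boot all_order all_algebra fraction.
From mathcomp Require Import ring zify.

Set Implicit Arguments.
Unset Strict Implicit.
Unset Printing Implicit Defensive.

Import Order.TTheory GRing.Theory Num.Theory.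
Local Open Scope ring_scope.

(* Running the subtractive Euclidean algorithm on (m, n) computes [m/n]_q as
   P/Q, each step x |-> x + 1 acting by (P, Q) |-> (qP + Q, Q) and each step
   x |-> x/(x + 1) by (P, Q) |-> (qP, qP + Q).  Along the way U P + V Q = q^d
   and Q(0) = 1, so P/Q is already reduced and (N, D) = +-(P, Q).  On (n, m)
   the algorithm performs the mirrored steps, which gives
   N_{n/m} = q^d D_{m/n}(1/q) and D_{n/m} = q^d N_{m/n}(1/q), hence
   C_{n/m} = q^(2d+1) C_{m/n}(1/q) = C*_{m/n}.  The theorem is then the
   two-square identity
   (qac + bd)^2 + q(ad - bc)^2 = (qa^2 + b^2)(qc^2 + d^2). *)

Lemma brahmagupta_identity (R : comPzRingType) (x a b c d : R) :
  (x * a * c + b * d) ^+ 2 + x * (a * d - b * c) ^+ 2 =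
  (x * a ^+ 2 + b ^+ 2) * (x * c ^+ 2 + d ^+ 2).
Proof. ring. Qed.

Lemma divDl_div (F : fieldType) (a b : F) : b != 0 -> a + b != 0 ->
  a / (a + b) = a / b / (a / b + 1).
Proof. by move=> b0 ab0; field; rewrite ab0 b0. Qed.

Lemma div_add1 (F : fieldType) (a : F) :
  a + 1 != 0 -> a / (a + 1) = 1 - (a + 1)^-1.
Proof. by move=> a1; field; rewrite a1. Qed.

Lemma qq_neq0 : qq != 0.
Proof. by rewrite tofrac_eq0 polyX_eq0. Qed.

Definition recip (d : nat) (p : {poly int}) : Qq :=
  qq ^+ d * (map_poly (fun c : int => c%:~R : Qq) p).[qq^-1].

Lemma recip01 : recip 0 1 = 1.
Proof. by rewrite /recip rmorph1 hornerC mul1r. Qed.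

Lemma recipD d p r : recip d (p + r) = recip d p + recip d r.
Proof. by rewrite /recip rmorphD hornerD mulrDr. Qed.

Lemma recipM d e p r : recip (d + e) (p * r) = recip d p * recip e r.
Proof. by rewrite /recip rmorphM hornerM exprD; ring. Qed.

Lemma recipS d p : recip d.+1 p = qq * recip d p.
Proof. by rewrite /recip exprS mulrA. Qed.

Lemma recipXM d p : recip d.+1 ('X * p) = recip d p.
Proof.
rewrite -[d.+1]add1n recipM /recip map_polyX hornerX expr1.
by rewrite divff ?qq_neq0 ?mul1r.
Qed.

Fixpoint qpair (w : seq bool) : {poly int} * {poly int} :=
  if w is b :: w' then
    let: (P, Q) := qpair w' in
    if b then ('X * P + Q, Q) else ('X * P, 'X * P + Q)
  else (1, 1).

Definition qfrac (w : seq bool) : Qq := (qpair w).1%:F / (qpair w).2%:F.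

Definition qform (PQ : {poly int} * {poly int}) : {poly int} :=
  'X * PQ.1 ^+ 2 + PQ.2 ^+ 2.

Lemma size_qpair w :
  size (qpair w).1 = (size w).+1 /\ (size (qpair w).2 <= (size w).+1)%N.
Proof.
elim: w => [|b w IH] /=; first by rewrite size_poly1.
move: IH; case: (qpair w) => P Q /= [sP sQ].
have sXP : size ('X * P) = (size w).+2.
  by rewrite mulrC size_mulX -?size_poly_eq0 sP.
have sXPQ : size ('X * P + Q) = (size w).+2 by rewrite size_polyDl sXP.
by case: b => /=; rewrite ?sXP ?sXPQ; split => //; apply: leq_trans sQ _.
Qed.

Lemma qden_horner0 w : (qpair w).2.[0] = 1.
Proof.
elim: w => [|b w] /=; first by rewrite hornerC.
case: (qpair w) => P Q /= Q0.
by case: b => //=; rewrite hornerD hornerM hornerX mul0r add0r.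
Qed.

Lemma qden_neq0 w : (qpair w).2 != 0.
Proof. by apply/eqP => Q0; move: (qden_horner0 w); rewrite Q0 horner0. Qed.

Lemma qpair_bezout w :
  exists U V, U * (qpair w).1 + V * (qpair w).2 = 'X ^+ size w.
Proof.
elim: w => [|b w] /=; first by exists 1, 0; rewrite mulr1 mul0r addr0.
case: (qpair w) => P Q /= [U [V e]]; rewrite exprS -e.
by case: b => /=; [exists U, ('X * V - U) | exists (U - 'X * V), ('X * V)]; ring.
Qed.

Lemma qpair_negb w :
  (qpair (map negb w)).1%:F = recip (size w) (qpair w).2 /\
  (qpair (map negb w)).2%:F = recip (size w) (qpair w).1.
Proof.
elim: w => [|b w] /=; first by rewrite recip01 tofrac1.
case: (qpair w) => P Q; case: (qpair (map negb w)) => P' Q' /= [e1 e2].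
have eXP : ('X * P')%:F = recip (size w).+1 Q by rewrite tofracM e1 recipS.
have eXPQ : ('X * P' + Q')%:F = recip (size w).+1 ('X * P + Q).
  by rewrite tofracD eXP e2 recipD recipXM addrC.
by case: b => /=; rewrite ?eXP ?eXPQ ?recipXM.
Qed.

Lemma size_qform w : size (qform (qpair w)) = (size w + size w).+2.
Proof.
have [sP sQ] := size_qpair w; rewrite /qform !expr2.
have P0 : (qpair w).1 != 0 by rewrite -size_poly_eq0 sP.
have sPP : size ((qpair w).1 * (qpair w).1) = (size w + size w).+1.
  by rewrite size_mul // sP addSn addnS.
have sQQ : (size ((qpair w).2 * (qpair w).2)%R <= (size w + size w).+1)%N.
  apply: leq_trans (size_polyMleq _ _) _; rewrite -subn1 leq_subLR; lia.
have sXPP : size ('X * ((qpair w).1 * (qpair w).1)) = (size w + size w).+2.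
  by rewrite mulrC size_mulX -?size_poly_eq0 sPP.
by rewrite size_polyDl sXPP // ltnS.
Qed.

Lemma qform_negb w :
  (qform (qpair (map negb w)))%:F =
  recip (size (qform (qpair w))).-1 (qform (qpair w)).
Proof.
have [e1 e2] := qpair_negb w.
rewrite size_qform /qform tofracD tofracM !tofracXn e1 e2 -/qq.
by rewrite recipD recipXM recipS !expr2 !recipM addrC.
Qed.

Lemma Xn_dvd_of_horner0 (Q R W : {poly int}) d :
  Q.[0] = 1 -> R * 'X ^+ d = Q * W -> exists W', W = W' * 'X ^+ d.
Proof.
move=> Q0; elim: d R W => [|d IH] R W e; first by exists W; rewrite mulr1.
have /factor_theorem [W1 eW] : root W 0.
  move/(congr1 (horner^~ 0)): e.
  by rewrite !hornerM hornerXn Q0 expr0n mulr0 mul1r => /esym/eqP.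
rewrite subr0 in eW; subst W.
have [|W' ->] := IH R W1; last by exists W'; rewrite exprSr mulrA.
apply: (@mulIf _ 'X); first by rewrite polyX_eq0.
by rewrite -mulrA -exprSr e mulrA.
Qed.

Lemma coprime_Zq_bezout_unique (N D P Q U V : {poly int}) d :
  coprime_Zq N D -> Q.[0] = 1 -> U * P + V * Q = 'X ^+ d -> N * Q = P * D ->
  N = P /\ D = Q \/ N = - P /\ D = - Q.
Proof.
move=> copND Q0 bezout cross.
pose W := U * N + V * D.
have eN : N * 'X ^+ d = P * W.
  rewrite -bezout /W; transitivity (U * N * P + V * (N * Q)); first ring.
  by rewrite cross; ring.
have eD : D * 'X ^+ d = Q * W.
  rewrite -bezout /W; transitivity (U * (P * D) + V * D * Q); first ring.
  by rewrite -cross; ring.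
have [c eW] := Xn_dvd_of_horner0 Q0 eD.
have Xd_reg : GRing.rreg ('X ^+ d : {poly int}).
  by apply/mulIf; rewrite expf_neq0 ?polyX_eq0.
have eNc : N = P * c by apply: Xd_reg; rewrite eN eW mulrA.
have eDc : D = Q * c by apply: Xd_reg; rewrite eD eW mulrA.
rewrite eNc eDc.
have [->|->] := copND c (ex_intro _ P eNc) (ex_intro _ Q eDc).
  by left; rewrite !mulr1.
by right; rewrite !mulrN1.
Qed.

Lemma qform_numden f x N D w :
  is_numden f x N D -> f (Some x) = Some (qfrac w) ->
  qform (N, D) = qform (qpair w).
Proof.
move=> [copND _ _ D0 ->] [eND].
have [U [V bezout]] := qpair_bezout w.
have cross : N * (qpair w).2 = (qpair w).1 * D.
  apply/eqP; rewrite -tofrac_eq !tofracM -eqr_div ?tofrac_eq0 ?qden_neq0 //.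
  by rewrite eND.
have [[-> ->]|[-> ->]] :=
  coprime_Zq_bezout_unique copND (qden_horner0 w) bezout cross; first by [].
by rewrite /qform /= !sqrrN.
Qed.

Lemma qfrac_nil : qfrac [::] = 1.
Proof. by rewrite /qfrac /= tofrac1 divr1. Qed.

Lemma qfrac_cons_true w : qfrac (true :: w) = qq * qfrac w + 1.
Proof.
rewrite /qfrac /=; have := qden_neq0 w; case: (qpair w) => P Q /= Q0.
by rewrite tofracD tofracM -/qq mulrDl divff ?tofrac_eq0 // mulrA.
Qed.

Lemma qfrac_shift_neq0 w : qq * qfrac w + 1 != 0.
Proof.
have := qden_neq0 (false :: w); have := qden_neq0 w.
rewrite -qfrac_cons_true /qfrac /=; case: (qpair w) => P Q /= Q0 XPQ0.
by rewrite mulf_neq0 ?invr_eq0 ?tofrac_eq0.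
Qed.

Lemma qfrac_cons_false w :
  qfrac (false :: w) = qq * qfrac w / (qq * qfrac w + 1).
Proof.
have := qden_neq0 (false :: w); have := qden_neq0 w.
rewrite /qfrac /=; case: (qpair w) => P Q /= Q0 XPQ0.
rewrite tofracD tofracM -/qq divDl_div ?mulrA ?tofrac_eq0 //.
by rewrite /qq -tofracM -tofracD tofrac_eq0.
Qed.

(* [k] is fuel: the word is complete as soon as m + n <= k. *)
Fixpoint euclid_word (k m n : nat) : seq bool :=
  if k is k'.+1 then
    if m == n then [::]
    else if (n < m)%N then true :: euclid_word k' (m - n) n
    else false :: euclid_word k' m (n - m)
  else [::].

Lemma euclid_word_swap k m n : euclid_word k n m = map negb (euclid_word k m n).
Proof.
elim: k m n => [|k IH] m n //=.
by case: (ltngtP m n) => //= _; rewrite IH.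
Qed.

Lemma qdeformation_add1 f x y : is_qdeformation f ->
  f (Some x) = Some y -> f (Some (x + 1)) = Some (qq * y + 1).
Proof. by move=> [_ fS _] fx; rewrite -[Some _]/(shiftQ (Some x)) fS fx. Qed.

Lemma qdeformation_div_add1 f x y : is_qdeformation f -> 0 <= x ->
  qq * y + 1 != 0 -> f (Some x) = Some y ->
  f (Some (x / (x + 1))) = Some (qq * y / (qq * y + 1)).
Proof.
move=> [_ fS fN] x_ge0 qy1 fx.
have x1 : x + 1 != 0 by rewrite gt_eqF // ltr_wpDl.
have -> : Some (x / (x + 1)) = shiftQ (negrecQ (shiftQ (Some x))).
  by rewrite /= (negbTE x1) div_add1 // addrC.
rewrite fS fN fS fx /= (negbTE qy1) /= div_add1 //.
by rewrite invfM mulrN mulrA divff ?qq_neq0 // mul1r addrC.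
Qed.

Lemma qdeformation_euclid_word f k m n : is_qdeformation f ->
  (0 < m)%N -> (0 < n)%N -> (m + n <= k)%N ->
  f (Some (m%:R / n%:R)) = Some (qfrac (euclid_word k m n)).
Proof.
move=> hf; have [f0 _ _] := hf.
elim: k m n => [|k IH] m n m_gt0 n_gt0 le_mn_k /=; first by lia.
have m0 : m%:R != 0 :> rat by rewrite pnatr_eq0 -lt0n.
have n0 : n%:R != 0 :> rat by rewrite pnatr_eq0 -lt0n.
case: (ltngtP m n) => [lt_mn|lt_nm|<-].
- have nm0 : (n - m)%:R != 0 :> rat by rewrite pnatr_eq0 -lt0n subn_gt0.
  rewrite -{1}(subnKC (ltnW lt_mn)) natrD divDl_div -?natrD ?subnKC 1?ltnW //.
  rewrite qfrac_cons_false; apply: qdeformation_div_add1 => //.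
  - by rewrite divr_ge0 ?ler0n.
  - exact: qfrac_shift_neq0.
  - by apply: IH; lia.
- have -> : (m%:R / n%:R : rat) = (m - n)%:R / n%:R + 1.
    by rewrite natrB 1?ltnW // mulrBl divff // subrK.
  rewrite qfrac_cons_true; apply: qdeformation_add1 => //.
  by apply: IH; lia.
- rewrite divff // qfrac_nil.
  by have := qdeformation_add1 hf f0; rewrite add0r mulr0 add0r.
Qed.

Theorem theorem2 (f : option rat -> option Qq) (m n : nat)
    (Nmn Dmn Nnm Dnm : {poly int}) :
  is_qdeformation f ->
  (1 <= n)%N -> (n < m)%N -> coprime m n ->
  is_numden f (m%:R / n%:R) Nmn Dmn ->
  is_numden f (n%:R / m%:R) Nnm Dnm ->
  let A : {poly int} := 'X * Nmn * Nnm + Dmn * Dnm in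
  let B : {poly int} := Nmn * Dnm - Dmn * Nnm in
  let C : {poly int} := 'X * Nmn ^+ 2 + Dmn ^+ 2 in
  let Cstar : Qq := qq ^+ (size C).-1 * (map_poly (fun c : int => c%:~R : Qq) C).[qq^-1] in
  (A ^+ 2 + 'X * B ^+ 2)%:F = C%:F * Cstar.
Proof.
move=> hf n_gt0 lt_nm _ numden_mn numden_nm A B C Cstar.
have m_gt0 : (0 < m)%N := ltn_trans n_gt0 lt_nm.
set w := euclid_word (m + n) m n.
have f_mn := qdeformation_euclid_word hf m_gt0 n_gt0 (leqnn _).
have f_nm := qdeformation_euclid_word hf n_gt0 m_gt0 (eq_leq (addnC n m)).
have C_mn : C = qform (qpair w) := qform_numden numden_mn f_mn.
have C_nm := qform_numden numden_nm f_nm.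
rewrite euclid_word_swap -/w in C_nm.
rewrite /A /B brahmagupta_identity tofracM -/C.
by congr (_ * _); rewrite [X in X%:F]C_nm qform_negb -C_mn.
Qed.
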